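(* Let $w>0$, $0<\lambda\le\frac12$ and $1\le E\le\frac{1}{2\lambda}$. Let $x:(0,\infty)\to(0,\infty)$ be differentiable and strictly decreasing with $\frac{x(p)}{p}\le -x'(p)\le E\frac{x(p)}{p}$ for all $p>0$. Define the update $p'=p\big(1+\lambda\min\{1,\frac{x(p)-w}{w}\}\big)$ and the potential $\phi(p)=|x(p)-w|\,p$. Then for every $p>0$, \[ \phi(p)-\phi(p')\ \ge\ w\,|p'-p|, \] where $w|p'-p|=\lambda\phi(p)$ if $x(p)\le 2w$, and $w|p'-p|=\lambda\frac{w}{x(p)-w}\phi(p)$ if $x(p)\ge 2w$. Consequently, if $p_0>0$ and $p_{k+1}=p_k'$ for $k\ge 0$, then for all $k\ge 0$, \[ \phi(p_k)\le\Big(1-\lambda\min\Big\{1,\tfrac{w}{|x(p_0)-w|}\Big\}\Big)^k\phi(p_0). \] *)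

From Stdlib Require Import Reals.
Open Scope R_scope.

Definition upd (x : R -> R) (w lam p : R) : R :=
  p * (1 + lam * Rmin 1 ((x p - w) / w)).

Definition phi (x : R -> R) (w p : R) : R := Rabs (x p - w) * p.

Fixpoint iter_upd (x : R -> R) (w lam p0 : R) (k : nat) : R :=
  match k with
  | O => p0
  | S k' => upd x w lam (iter_upd x w lam p0 k')
  end.

From Stdlib Require Import Reals Lra Psatz.
Open Scope R_scope.

(* The elasticity bounds give two facts: the revenue p x(p) is nonincreasing
   (as -x' >= x/p), and x(p) - x(q) <= E (x(p)/p) (q - p) for p < q (as
   -x' <= E x/p and x/p decreases).  Under excess demand x(p) > w they show,
   with E lam <= 1/2, that the raised price still has x(p') >= w; under a
   deficit x(p') may overshoot w, but stays below 2w and the overshoot is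
   bounded by a polynomial inequality in lam and s = (w - x(p))/w.  Since x(p_k) stays below
   max (2w) (x(p_0)), the step w |p' - p| is at least
   lam min {1, w/|x(p_0) - w|} phi(p) along the whole orbit. *)

Section Elasticity.

Variables (E : R) (x dx : R -> R).
Hypothesis hE : 0 <= E.
Hypothesis hpos : forall p, 0 < p -> 0 < x p.
Hypothesis hdiff : forall p, 0 < p -> derivable_pt_lim x p (dx p).
Hypothesis hdec : forall a b, 0 < a -> a < b -> x b < x a.
Hypothesis hder : forall p, 0 < p -> x p / p <= - dx p /\ - dx p <= E * (x p / p).

Lemma revenue_nonincreasing a b : 0 < a -> a < b -> b * x b <= a * x a.
Proof.
  intros Ha Hab.
  destruct (MVT_cor2 (mult_fct id x) (fun c => 1 * x c + id c * dx c) a b Hab)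
    as [c [Hc Hac]].
  { intros c Hc. apply derivable_pt_lim_mult; [apply derivable_pt_lim_id|].
    apply hdiff; lra. }
  unfold mult_fct, id in Hc.
  assert (Hc0 : 0 < c) by lra.
  destruct (hder c Hc0) as [Hlow _].
  assert (x c <= - c * dx c).
  { replace (x c) with (x c / c * c) by (field; lra). nra. }
  nra.
Qed.

Lemma demand_drop_le a b : 0 < a -> a < b -> x a - x b <= E * (x a / a) * (b - a).
Proof.
  intros Ha Hab.
  destruct (MVT_cor2 x dx a b Hab) as [c [Hc Hac]].
  { intros c Hc. apply hdiff; lra. }
  assert (Hc0 : 0 < c) by lra.
  destruct (hder c Hc0) as [_ Hup].
  assert (Hratio : x c / c <= x a / a).
  { unfold Rdiv. apply Rmult_le_compat.
    - left; apply hpos; lra.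
    - left; apply Rinv_0_lt_compat; lra.
    - left; apply hdec; lra.
    - apply Rinv_le_contravar; lra. }
  assert (- dx c <= E * (x a / a)) by nra.
  nra.
Qed.

End Elasticity.

(* One update in terms of y = x(p), y' = x(p (1 + d)): the last two
   hypotheses are [revenue_nonincreasing] and [demand_drop_le] at p and
   p (1 + d). *)
Lemma excess_step_bound w E y y' d :
  0 < w -> w < y -> 0 < d -> 2 * E * d <= 1 -> 2 * E * d * w <= y - w ->
  y' * (1 + d) <= y -> y - y' <= E * y * d ->
  Rabs (y' - w) * (1 + d) <= y - w - w * d /\ y' <= y.
Proof.
  intros Hw Hy Hd HEd HEdw Hrev Hdrop.
  assert (Hy' : w <= y').
  { destruct (Rle_or_lt (2 * w) y) as [Hbig|Hsmall]; [nra|].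
    assert (w * (w - y') <= (w - y) * (2 * w - y) / 2) by nra. nra. }
  rewrite Rabs_right by lra. split; nra.
Qed.

Lemma deficit_step_bound w lam E y y' d :
  0 < w -> 0 < lam -> lam <= 1/2 -> 2 * E * lam <= 1 ->
  0 < y -> y < w -> d * w = lam * (y - w) ->
  y <= (1 + d) * y' -> (1 + d) * (y' - y) <= - E * d * y' ->
  Rabs (y' - w) * (1 + d) <= w - y + w * d /\ y' <= 2 * w.
Proof.
  intros Hw Hlam0 Hlam1 HElam Hy0 Hyw Hd Hrev Hdrop.
  set (s := (w - y) / w).
  assert (Hys : y = w * (1 - s)) by (unfold s; field; lra).
  assert (Hs : 0 < s < 1).
  { unfold s; split; [apply Rdiv_lt_0_compat; lra|].
    apply Rmult_lt_reg_r with w; [lra|]. field_simplify; lra. }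
  assert (Hds : d = - lam * s) by (apply Rmult_eq_reg_r with w; [|lra]; rewrite Hd, Hys; ring).
  clearbody s. subst y d.
  destruct (Rle_or_lt w y') as [Hover|Hunder].
  2:{ rewrite Rabs_left by lra. split; nra. }
  rewrite Rabs_right by lra.
  assert (Hlams : lam * s <= s / 2) by nra.
  assert (Hden : 0 < 1 - lam * s - s / 2) by lra.
  assert (HElams : E * lam * (s * y') <= 1/2 * (s * y')).
  { apply Rmult_le_compat_r; [apply Rmult_le_pos|]; lra. }
  assert (Hy'bound : y' * (1 - lam * s - s / 2) <= (1 - lam * s) * (w * (1 - s))) by nra.
  (* the two sides of [Hkey] differ by exactly [w * s * P], [P] this polynomial *)
  assert (Hpoly : 0 <= (1 - lam) * (1 - 2 * lam)
                     + (1 - s) * (1/2 + 2 * lam - 2 * lam * lam - lam * lam * s)) by nra.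
  assert (Hkey : (1 - lam * s) * (1 - lam * s) * (w * (1 - s))
                 <= (1 - lam * s - s / 2) * (w * (1 + s - 2 * lam * s))) by nra.
  assert (y' * (1 - lam * s) <= 2 * w * (1 - lam * s) - w * (1 - s)).
  { apply Rmult_le_reg_r with (1 - lam * s - s / 2); [lra|]. nra. }
  split; nra.
Qed.

Lemma phi_nonneg (x : R -> R) (w p : R) : 0 <= p -> 0 <= phi x w p.
Proof. intros Hp. unfold phi. apply Rmult_le_pos; [apply Rabs_pos | exact Hp]. Qed.

Section Update.

Variables (w lam E : R) (x dx : R -> R).
Hypothesis hw : 0 < w.
Hypothesis hlam0 : 0 < lam.
Hypothesis hlam1 : lam <= 1/2.
Hypothesis hE : 0 <= E.
Hypothesis hElam : 2 * E * lam <= 1.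
Hypothesis hpos : forall p, 0 < p -> 0 < x p.
Hypothesis hdiff : forall p, 0 < p -> derivable_pt_lim x p (dx p).
Hypothesis hdec : forall a b, 0 < a -> a < b -> x b < x a.
Hypothesis hder : forall p, 0 < p -> x p / p <= - dx p /\ - dx p <= E * (x p / p).

Lemma upd_step_excess p : 0 < p -> w < x p ->
  0 < upd x w lam p /\
  w * Rabs (upd x w lam p - p) <= phi x w p - phi x w (upd x w lam p) /\
  x (upd x w lam p) <= x p.
Proof.
  intros Hp Hy. unfold upd, phi.
  set (y := x p) in *.
  set (r := (y - w) / w).
  assert (Hr : 0 < r) by (apply Rdiv_lt_0_compat; lra).
  assert (Hrw : r * w = y - w) by (unfold r; field; lra).
  assert (Hm0 : 0 < Rmin 1 r) by (apply Rmin_pos; lra).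
  pose proof (Rmin_l 1 r) as Hm1. pose proof (Rmin_r 1 r) as Hmr.
  set (d := lam * Rmin 1 r).
  assert (Hd : 0 < d) by (unfold d; nra).
  assert (HEd : 2 * E * d <= 1).
  { unfold d. assert (0 <= 2 * E * lam) by nra. nra. }
  assert (HEdw : 2 * E * d * w <= y - w).
  { unfold d. assert (0 <= (1 - 2 * E * lam) * (Rmin 1 r * w)) by (apply Rmult_le_pos; nra).
    nra. }
  set (u := p * (1 + d)).
  assert (Hpu : p < u) by (unfold u; nra).
  assert (Hrev : x u * (1 + d) <= y).
  { apply Rmult_le_reg_l with p; [lra|].
    replace (p * (x u * (1 + d))) with (u * x u) by (unfold u; ring).
    exact (revenue_nonincreasing E x dx hdiff hder p u Hp Hpu). }
  assert (Hdrop : y - x u <= E * y * d).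
  { pose proof (demand_drop_le E x dx hE hpos hdiff hdec hder p u Hp Hpu) as H.
    replace (E * (x p / p) * (u - p)) with (E * y * d) in H by (unfold u, y; field; lra).
    exact H. }
  destruct (excess_step_bound w E y (x u) d hw Hy Hd HEd HEdw Hrev Hdrop) as [Hgain Hle].
  split; [lra | split; [|exact Hle]].
  rewrite (Rabs_right (y - w)), (Rabs_right (u - p)) by lra.
  unfold u in *; nra.
Qed.

Lemma upd_step_deficit p : 0 < p -> x p < w ->
  0 < upd x w lam p /\
  w * Rabs (upd x w lam p - p) <= phi x w p - phi x w (upd x w lam p) /\
  x (upd x w lam p) <= 2 * w.
Proof.
  intros Hp Hy. unfold upd, phi.
  set (y := x p) in *.
  assert (Hy0 : 0 < y) by (apply hpos; exact Hp).
  set (r := (y - w) / w).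
  assert (Hrw : r * w = y - w) by (unfold r; field; lra).
  assert (Hr : -1 < r < 0) by nra.
  rewrite (Rmin_right 1 r) by lra.
  set (d := lam * r).
  assert (Hdw : d * w = lam * (y - w)) by (unfold d; rewrite Rmult_assoc, Hrw; ring).
  assert (Hd : - lam < d < 0) by (unfold d; nra).
  set (u := p * (1 + d)).
  assert (Hu : 0 < u) by (unfold u; nra).
  assert (Hup : u < p) by (unfold u; nra).
  assert (Hrev : y <= (1 + d) * x u).
  { apply Rmult_le_reg_l with p; [lra|].
    replace (p * ((1 + d) * x u)) with (u * x u) by (unfold u; ring).
    exact (revenue_nonincreasing E x dx hdiff hder u p Hu Hup). }
  assert (Hdrop : (1 + d) * (x u - y) <= - E * d * x u).
  { pose proof (demand_drop_le E x dx hE hpos hdiff hdec hder u p Hu Hup) as H.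
    replace (E * (x u / u) * (p - u)) with (- E * d * x u / (1 + d)) in H
      by (unfold u; field; lra).
    apply Rmult_le_compat_l with (r := 1 + d) in H; [|lra].
    replace ((1 + d) * (- E * d * x u / (1 + d))) with (- E * d * x u) in H by (field; lra).
    exact H. }
  destruct (deficit_step_bound w lam E y (x u) d hw hlam0 hlam1 hElam Hy0 Hy Hdw Hrev Hdrop)
    as [Hgain Hle].
  split; [lra | split; [|exact Hle]].
  rewrite (Rabs_left (y - w)), (Rabs_left (u - p)) by lra.
  unfold u in *; nra.
Qed.

Lemma upd_step p : 0 < p ->
  0 < upd x w lam p /\
  w * Rabs (upd x w lam p - p) <= phi x w p - phi x w (upd x w lam p) /\
  x (upd x w lam p) <= Rmax (2 * w) (x p).
Proof.
  intros Hp.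
  destruct (total_order_T (x p) w) as [[Hlt | Heq] | Hgt].
  - destruct (upd_step_deficit p Hp Hlt) as (Hpos & Hgain & Hle).
    repeat split; [exact Hpos | exact Hgain | eapply Rle_trans; [exact Hle | apply Rmax_l]].
  - assert (Hfix : upd x w lam p = p).
    { unfold upd. rewrite Heq. replace ((w - w) / w) with 0 by (field; lra).
      rewrite Rmin_right by lra. ring. }
    rewrite Hfix, Rminus_diag, Rabs_R0.
    repeat split; [exact Hp | lra | apply Rmax_r].
  - destruct (upd_step_excess p Hp Hgt) as (Hpos & Hgain & Hle).
    repeat split; [exact Hpos | exact Hgain | eapply Rle_trans; [exact Hle | apply Rmax_r]].
Qed.

Lemma upd_dist_low p : 0 < p -> x p <= 2 * w ->
  w * Rabs (upd x w lam p - p) = lam * phi x w p.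
Proof.
  intros Hp Hx. unfold upd, phi.
  rewrite Rmin_right.
  2:{ apply Rmult_le_reg_r with w; [lra|]. unfold Rdiv.
      rewrite Rmult_assoc, Rinv_l by lra. lra. }
  replace (p * (1 + lam * ((x p - w) / w)) - p) with ((x p - w) * (p * lam / w))
    by (field; lra).
  rewrite Rabs_mult, (Rabs_right (p * lam / w)).
  2:{ left. apply Rdiv_lt_0_compat; nra. }
  field; lra.
Qed.

Lemma upd_dist_high p : 0 < p -> x p >= 2 * w ->
  w * Rabs (upd x w lam p - p) = lam * (w / (x p - w)) * phi x w p.
Proof.
  intros Hp Hx. unfold upd, phi.
  rewrite Rmin_left.
  2:{ apply Rmult_le_reg_r with w; [lra|]. unfold Rdiv.
      rewrite Rmult_assoc, Rinv_l by lra. lra. }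
  replace (p * (1 + lam * 1) - p) with (p * lam) by ring.
  rewrite Rabs_right by nra. rewrite (Rabs_right (x p - w)) by lra.
  field; lra.
Qed.

Lemma phi_upd_contract c p : 0 < p -> c <= 1 ->
  (2 * w < x p -> c <= w / (x p - w)) ->
  phi x w (upd x w lam p) <= (1 - lam * c) * phi x w p.
Proof.
  intros Hp Hc Hchigh.
  destruct (upd_step p Hp) as (_ & Hgain & _).
  pose proof (phi_nonneg x w p (Rlt_le 0 p Hp)) as Hphi.
  assert (lam * c * phi x w p <= w * Rabs (upd x w lam p - p)); [|lra].
  destruct (Rle_or_lt (x p) (2 * w)) as [Hlow | Hhigh].
  - rewrite upd_dist_low by lra.
    assert (0 <= lam * phi x w p * (1 - c)) by (apply Rmult_le_pos; nra).
    nra.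
  - rewrite upd_dist_high by lra.
    specialize (Hchigh Hhigh).
    assert (0 <= lam * phi x w p) by nra.
    nra.
Qed.

Lemma iter_upd_bounds p0 : 0 < p0 -> forall k,
  let p := iter_upd x w lam p0 k in
  0 < p /\ x p <= Rmax (2 * w) (x p0) /\
  phi x w p <= (1 - lam * Rmin 1 (w / Rabs (x p0 - w))) ^ k * phi x w p0.
Proof.
  intros Hp0 k. set (c := Rmin 1 (w / Rabs (x p0 - w))).
  assert (Hc : c <= 1) by apply Rmin_l.
  induction k as [|k IH]; cbn [iter_upd pow].
  - repeat split; [exact Hp0 | apply Rmax_r | lra].
  - destruct IH as (Hp & Hx & Hphi). set (p := iter_upd x w lam p0 k) in *.
    destruct (upd_step p Hp) as (Hpos & _ & Hx').
    assert (Hchigh : 2 * w < x p -> c <= w / (x p - w)).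
    { intros Hhigh.
      assert (Hx0 : x p <= x p0) by (unfold Rmax in Hx; destruct Rle_dec; lra).
      unfold c. eapply Rle_trans; [apply Rmin_r|].
      rewrite Rabs_right by lra.
      apply Rmult_le_compat_l; [lra | apply Rinv_le_contravar; lra]. }
    repeat split; [exact Hpos | |].
    + eapply Rle_trans; [exact Hx' | apply Rmax_lub; [apply Rmax_l | exact Hx]].
    + eapply Rle_trans; [apply (phi_upd_contract c p Hp Hc Hchigh)|].
      rewrite Rmult_assoc. apply Rmult_le_compat_l; [nra | exact Hphi].
Qed.

End Update.

Theorem mainTheorem5 (w lam E : R) (x dx : R -> R)
  (hw : 0 < w) (hlam0 : 0 < lam) (hlam1 : lam <= 1/2)
  (hE1 : 1 <= E) (hE2 : E <= 1 / (2 * lam))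
  (hpos : forall p, 0 < p -> 0 < x p)
  (hdiff : forall p, 0 < p -> derivable_pt_lim x p (dx p))
  (hdec : forall a b, 0 < a -> a < b -> x b < x a)
  (hder : forall p, 0 < p -> x p / p <= - dx p /\ - dx p <= E * (x p / p)) :
  (forall p, 0 < p ->
     phi x w p - phi x w (upd x w lam p) >= w * Rabs (upd x w lam p - p)) /\
  (forall p, 0 < p -> x p <= 2 * w ->
     w * Rabs (upd x w lam p - p) = lam * phi x w p) /\
  (forall p, 0 < p -> x p >= 2 * w ->
     w * Rabs (upd x w lam p - p) = lam * (w / (x p - w)) * phi x w p) /\
  (forall p0, 0 < p0 -> forall k : nat,
     phi x w (iter_upd x w lam p0 k)
       <= (1 - lam * Rmin 1 (w / Rabs (x p0 - w))) ^ k * phi x w p0).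
Proof.
  assert (hE : 0 <= E) by lra.
  assert (hElam : 2 * E * lam <= 1).
  { apply Rmult_le_compat_r with (r := 2 * lam) in hE2; [|lra].
    replace (1 / (2 * lam) * (2 * lam)) with 1 in hE2 by (field; lra). lra. }
  split; [|split; [|split]].
  - intros p Hp. apply Rle_ge.
    apply (upd_step w lam E x dx hw hlam0 hlam1 hE hElam hpos hdiff hdec hder p Hp).
  - exact (upd_dist_low w lam x hw hlam0).
  - exact (upd_dist_high w lam x hw hlam0).
  - intros p0 Hp0 k.
    apply (iter_upd_bounds w lam E x dx hw hlam0 hlam1 hE hElam hpos hdiff hdec hder p0 Hp0 k).
Qed.
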